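(* Let $R$ be a commutative ring different from the zero ring, $\Gamma$ an EI-category with endofunctor $\phi$, $C$ and $D$ finite free $R\Gamma$-chain complexes, and $v\colon C\to D$ and $f\colon D\to C\circ\phi$ $R\Gamma$-chain maps. Then $u(f\circ v)+s(\chi(D))=u((v\circ\phi)\circ f)+s(\chi(C))$ in $U(R,\Gamma,\phi)$.
   Context: EI-category: small category in which every endomorphism is an isomorphism. $R\Gamma$-modules are contravariant functors $\Gamma\to R$-modules; finitely generated free ones are isomorphic to finite sums of $R\Gamma(?,x)=R[\mathrm{Mor}_\Gamma(?,x)]$. $U(R,\Gamma,\phi)$ is $K_0$ of the exact category whose objects are natural transformations $g\colon M\to M\circ\phi$ with $M$ finitely generated free and morphisms $\tau\colon M\to M'$ with $g'\tau=(\tau\circ\phi)g$; for a chain map $g\colon C\to C\circ\phi$, $u(g)=\sum_n(-1)^n[g_n]$. $U(\Gamma)=\bigoplus_{\mathrm{Is}\,\Gamma}\mathbb{Z}$ (isomorphism classes of objects); the rank of $\bigoplus_i R\Gamma(?,x_i)$ is the element counting the $x_i$ in each isomorphism class, and $\chi(C)=\sum_n(-1)^n\mathrm{rk}(C_n)\in U(\Gamma)$. The homomorphism $s\colon U(\Gamma)\to U(R,\Gamma,\phi)$ sends the basis element of $\bar x$ to the class of the zero map $R\Gamma(?,x)\to R\Gamma(?,x)\circ\phi$. *)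

From HB Require Import structures.
From mathcomp Require Import all_boot all_algebra.
From mathcomp Require Import finmap.
From mathcomp Require Import boolp.
From mathcomp Require Import monalg.
Unset Strict Implicit. Unset Printing Implicit Defensive.
Import GRing.Theory.
Local Open Scope ring_scope.
Local Open Scope fset_scope.

Set Implicit Arguments.
Section Remap.
Variables (R : comNzRingType) (K K' : choiceType) (F : K -> K').
Definition remap (a : {malg R[K]}) : {malg R[K']} :=
  \sum_(k <- msupp a) << a@_k *g F k >>.
Lemma remapEw (d : {fset K}) a : msupp a `<=` d ->
  remap a = \sum_(k <- d) << a@_k *g F k >>.
Proof.
move=> le; rewrite /remap; apply: big_fset_incl => // k _ kn.
by rewrite mcoeff_outdom // monalgU0.
Qed.
Lemma remap_linear : linear remap.
Proof.
move=> c a b.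
set d := msupp a `|` msupp b `|` msupp (c *: a + b).
have sa : msupp a `<=` d by apply/fsubsetP=> k ka; rewrite !inE ka.
have sb : msupp b `<=` d by apply/fsubsetP=> k kb; rewrite !inE kb orbT.
have sab : msupp (c *: a + b) `<=` d by apply/fsubsetP=> k kb; rewrite !inE kb !orbT.
rewrite (remapEw sab) (remapEw sa) (remapEw sb).
rewrite scaler_sumr -big_split /=; apply: eq_bigr => k _.
rewrite mcoeffD mcoeffZ monalgUD; congr (_ + _)%R.
by apply/malgP => k'; rewrite mcoeffZ !mcoeffU mulrnAr.
Qed.
HB.instance Definition _ :=
  GRing.isLinear.Build R {malg R[K]} {malg R[K']} _ remap remap_linear.
Lemma remapU x k : remap << x *g k >> = << x *g F k >>.
Proof. by rewrite (remapEw msuppU_le) big_seq_fset1 mcoeffUU. Qed.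
End Remap.

Lemma remap_id (R : comNzRingType) (K : choiceType) (a : {malg R[K]}) :
  remap id a = a.
Proof. by rewrite /remap -monalgE. Qed.

Lemma remap_comp (R : comNzRingType) (K1 K2 K3 : choiceType)
  (F : K1 -> K2) (H : K2 -> K3) (a : {malg R[K1]}) :
  remap (H \o F) a = remap H (remap F a).
Proof.
have -> : remap F a = \sum_(k <- msupp a) << a@_k *g F k >> by [].
rewrite raddf_sum /=; apply: eq_bigr => k _; by rewrite remapU.
Qed.

Unset Implicit Arguments.
Local Close Scope fset_scope.

Record EICategory := {
  Ob : Type;
  Hom : Ob -> Ob -> Type;
  idm : forall x, Hom x x;
  comp : forall x y z, Hom y z -> Hom x y -> Hom x z;
  comp1m : forall x y (f : Hom x y), comp x y y (idm y) f = f;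
  compm1 : forall x y (f : Hom x y), comp x x y f (idm x) = f;
  compA : forall w x y z (f : Hom y z) (g : Hom x y) (k : Hom w x),
      comp w x z (comp x y z f g) k = comp w y z f (comp w x y g k);
  endo_iso : forall x (f : Hom x x),
      exists g : Hom x x, comp x x x g f = idm x /\ comp x x x f g = idm x
}.
Arguments Hom {G} : rename.
Arguments idm {G} x : rename.
Arguments comp {G x y z} : rename.

Record endofunctor (G : EICategory) := {
  fobj : Ob G -> Ob G;
  fmap : forall x y : Ob G, Hom x y -> Hom (fobj x) (fobj y);
  fmap_id : forall x, fmap x x (idm x) = idm (fobj x);
  fmap_comp : forall x y z (f : Hom y z) (g : Hom x y),
      fmap x z (comp f g) = comp (fmap y z f) (fmap x y g)
}.
Arguments fobj {G} p x : rename.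
Arguments fmap {G} p {x y} f : rename.

Record RGmod (R : comNzRingType) (G : EICategory) := {
  mobj : Ob G -> lmodType R;
  mmap : forall x y : Ob G, Hom x y -> mobj y -> mobj x;
  mmap_linear : forall x y (f : Hom x y), linear (mmap x y f);
  mmap_id : forall x (m : mobj x), mmap x x (idm x) m = m;
  mmap_comp : forall x y z (f : Hom y z) (g : Hom x y) (m : mobj z),
      mmap x z (comp f g) m = mmap x y g (mmap y z f m)
}.
Arguments mobj {R G} M x : rename.
Arguments mmap {R G} M {x y} f m : rename.

Section Modules.
Variables (R : comNzRingType) (G : EICategory).

Definition precomp (M : RGmod R G) (phi : endofunctor G) : RGmod R G.
Proof.
refine {| mobj := fun c => mobj M (fobj phi c);
          mmap := fun x y f => mmap M (fmap phi f) |}.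
- by move=> x y f; apply: mmap_linear.
- by move=> x m /=; rewrite fmap_id mmap_id.
- by move=> x y z f g m /=; rewrite fmap_comp mmap_comp.
Defined.

Definition ntfam (M N : RGmod R G) := forall x : Ob G, mobj M x -> mobj N x.

Definition is_nat {M N : RGmod R G} (t : ntfam M N) :=
  (forall x, linear (t x)) /\
  (forall x y (f : Hom x y) (m : mobj M y), t x (mmap M f m) = mmap N f (t y m)).

Definition homT (c x : Ob G) : Type := Hom c x.
HB.instance Definition _ c x := gen_eqMixin (homT c x).
HB.instance Definition _ c x := gen_choiceMixin (homT c x).

Definition RGrep (x : Ob G) : RGmod R G.
Proof.
refine {| mobj := fun c => GRing.Lmodule.clone R {malg R[homT c x]} _;
          mmap := fun c d (a : Hom c d) =>
            remap (fun k : homT d x => (comp k a : homT c x)) |}.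
- by move=> c d a; apply: remap_linear.
- move=> c m /=; rewrite -[RHS]remap_id /remap; apply: eq_bigr => k _.
  by rewrite compm1.
- move=> c d e a b m /=; rewrite -remap_comp /remap; apply: eq_bigr => k _.
  by rewrite -compA.
Defined.

Definition basis_sum (M : RGmod R G) {n : nat} (xs : 'I_n -> Ob G)
    (b : forall i, mobj M (xs i)) (c : Ob G)
    (a : forall i : 'I_n, {malg R[homT c (xs i)]}) : mobj M c :=
  \sum_(i < n) \sum_(k <- msupp (a i)) (a i)@_k *: mmap M (k : Hom c (xs i)) (b i).

Definition is_basis (M : RGmod R G) {n : nat} (xs : 'I_n -> Ob G)
    (b : forall i, mobj M (xs i)) :=
  forall c : Ob G, bijective (basis_sum M xs b c).

Definition fg_free (M : RGmod R G) :=
  exists (n : nat) (xs : 'I_n -> Ob G) (b : forall i, mobj M (xs i)),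
    is_basis M xs b.

(* The exact category defining U(R, Gamma, phi):                       *)
(*  exact sequences: objectwise short exact sequences.                 *)
Variable phi : endofunctor G.

Definition is_Uobj {M : RGmod R G} (g : ntfam M (precomp M phi)) :=
  fg_free M /\ is_nat g.

Definition is_Umor {M M' : RGmod R G} (g : ntfam M (precomp M phi))
    (g' : ntfam M' (precomp M' phi)) (t : ntfam M M') :=
  is_nat t /\ (forall x (m : mobj M x), g' x (t x m) = t (fobj phi x) (g x m)).

(* an additive invariant of this exact category with values in A; the
   class map into K_0 = U(R, Gamma, phi) is the universal one, so an
   identity holds in U(R, Gamma, phi) iff it holds after applying every
   additive invariant. *)
Definition additive_invariant (A : zmodType)
    (h : forall M : RGmod R G, ntfam M (precomp M phi) -> A) :=
  (forall (M M' : RGmod R G) g g' (t : ntfam M M'),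
      is_Uobj g -> is_Uobj g' -> is_Umor g g' t ->
      (forall x, bijective (t x)) -> h M g = h M' g') /\
  (forall (M1 M M2 : RGmod R G) g1 g g2 (i : ntfam M1 M) (p : ntfam M M2),
      is_Uobj g1 -> is_Uobj g -> is_Uobj g2 ->
      is_Umor g1 g i -> is_Umor g g2 p ->
      (forall x, injective (i x)) ->
      (forall x (m2 : mobj M2 x), exists m, p x m = m2) ->
      (forall x (m : mobj M x), p x m = 0 <-> exists m1, i x m1 = m) ->
      h M g = h M1 g1 + h M2 g2).

Record chaincx := {
  cmod : int -> RGmod R G;
  cdiff : forall n : int, ntfam (cmod n) (cmod (n - 1))
}.

Definition is_chaincx (C : chaincx) :=
  (forall n, is_nat (cdiff C n)) /\
  (forall n x (m : mobj (cmod C n) x), cdiff C (n - 1) x (cdiff C n x m) = 0).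

Definition cx_precomp (C : chaincx) : chaincx :=
  {| cmod := fun n => precomp (cmod C n) phi;
     cdiff := fun n x => cdiff C n (fobj phi x) |}.

Definition chainfam (C D : chaincx) := forall n : int, ntfam (cmod C n) (cmod D n).

Definition is_chainmap {C D : chaincx} (v : chainfam C D) :=
  (forall n, is_nat (v n)) /\
  (forall n x (m : mobj (cmod C n) x),
      v (n - 1) x (cdiff C n x m) = cdiff D n x (v n x m)).

Definition cx_finite_free (C : chaincx) (N : nat) (nb : int -> nat)
    (xs : forall n, 'I_(nb n) -> Ob G)
    (b : forall n (i : 'I_(nb n)), mobj (cmod C n) (xs n i)) :=
  (forall n, is_basis (cmod C n) (xs n) (b n)) /\
  (forall n : int, (N < `|n|)%N -> forall x (m : mobj (cmod C n) x), m = 0).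

(* Evaluations under an additive invariant h of the elements of U(R,Gamma,phi)
   u(g) = sum_n (-1)^n [g_n]  and  s(chi(C)) = sum_n (-1)^n s(rk C_n),
   where rk C_n = sum_i  class(xs n i)  and  s(class x) = [0 : R Gamma(?,x) ->
   R Gamma(?,x) o phi].  Sums range over -N <= n <= N. *)
Section Eval.
Variables (A : zmodType) (h : forall M : RGmod R G, ntfam M (precomp M phi) -> A).

Definition u_eval {C : chaincx} (g : chainfam C (cx_precomp C)) (N : nat) : A :=
  \sum_(j < (N + N).+1)
     h (cmod C (j%:Z - N%:Z)) (g (j%:Z - N%:Z)) *~ ((-1) ^ (j%:Z - N%:Z)).

Definition zero_endo (x : Ob G) : ntfam (RGrep x) (precomp (RGrep x) phi) :=
  fun c _ => 0.

Definition s_chi_eval (N : nat) (nb : int -> nat) (xs : forall n, 'I_(nb n) -> Ob G) : A :=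
  \sum_(j < (N + N).+1)
     (\sum_(i < nb (j%:Z - N%:Z)) h (RGrep (xs (j%:Z - N%:Z) i)) (zero_endo _))
       *~ ((-1) ^ (j%:Z - N%:Z)).
End Eval.

End Modules.

Arguments is_Uobj {R G} phi {M} g.
Arguments is_Umor {R G} phi {M M'} g g' t.
Arguments additive_invariant {R G} phi {A} h.
Arguments cx_precomp {R G} phi C.
Arguments cx_finite_free {R G} C N {nb} xs b.
Arguments u_eval {R G} phi {A} h {C} g N.
Arguments s_chi_eval {R G} phi {A} h N {nb} xs.
Arguments precomp {R G} M phi.
Arguments ntfam {R G} M N.
Arguments RGrep {R G} x.
Arguments cmod {R G} c n.
Arguments cdiff {R G} c n.
Arguments is_chaincx {R G} C.
Arguments chainfam {R G} C D.
Arguments fg_free {R G} M.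
Arguments is_chainmap {R G C D} v.
Arguments is_nat {R G M N} t.
Arguments basis_sum {R G} M {n} xs b c a.
Arguments is_basis {R G} M {n} xs b.

From Pilot Require Import Defs.
From HB Require Import structures.
From mathcomp Require Import all_boot all_algebra.
From mathcomp Require Import finmap boolp monalg.
Import GRing.Theory.
Local Open Scope ring_scope.

(* The identity holds degreewise: both sides are alternating sums of classes
   of the individual degrees, so only the degreewise naturality of v and f is
   used, never the differentials.  In one degree, let v : M1 -> M2 and
   f : M2 -> M1 o phi with M1, M2 finitely generated free.  On M1 (+) M2 the
   endomorphisms
     (m1, m2) |-> (f v m1 + f m2, 0)   and   (m1, m2) |-> (f m2, v f m2)
   are conjugate under the shear (m1, m2) |-> (m1, m2 + v m1), and both are
   upper triangular with respect to M1 <= M1 (+) M2, so additivity gives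
   [f v] + [0 on M2] = [0 on M1] + [v f].  Finally [0 on M] = s(rk M), because
   a basis identifies M with (+)_i R Gamma(?, x_i), from which the summands
   can be split off one at a time. *)

Section LinearFun.
Variables (R : comNzRingType) (U V : lmodType R) (f : U -> V).
Hypothesis f_lin : linear f.

Lemma lin0 : f 0 = 0.
Proof.
have := f_lin 1 0 0; rewrite !scale1r addr0 => E.
by apply: (@addrI _ (f 0)); rewrite addr0 -E.
Qed.

Lemma linD u w : f (u + w) = f u + f w.
Proof. by have := f_lin 1 u w; rewrite !scale1r. Qed.

Lemma linZ a u : f (a *: u) = a *: f u.
Proof. by have := f_lin a u 0; rewrite !addr0 lin0 addr0. Qed.

Lemma lin_sum (I : Type) (r : seq I) (P : pred I) (F : I -> U) :
  f (\sum_(i <- r | P i) F i) = \sum_(i <- r | P i) f (F i).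
Proof. by elim/big_rec2: _ => [|i y1 y2 _ <-]; rewrite ?lin0 ?linD. Qed.

End LinearFun.
Arguments lin0 {R U V f} f_lin.
Arguments linD {R U V f} f_lin u w.
Arguments linZ {R U V f} f_lin a u.
Arguments lin_sum {R U V f} f_lin {I} r P F.

Section DirectSum.
Variables (R : comNzRingType) (I : finType) (T : I -> lmodType R).

Definition dsum := {dffun forall i, T i}.
HB.instance Definition _ := Choice.copy dsum {dffun forall i, T i}.

Definition dsum0 : dsum := finfun (fun i => (0 : T i)).
Definition dsum_opp (u : dsum) : dsum := finfun (fun i => - u i).
Definition dsum_add (u w : dsum) : dsum := finfun (fun i => u i + w i).
Definition dsum_scale (a : R) (u : dsum) : dsum := finfun (fun i => a *: u i).

Lemma dsum_addA : associative dsum_add.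
Proof. by move=> u w z; apply/ffunP=> i; rewrite !ffunE addrA. Qed.
Lemma dsum_addC : commutative dsum_add.
Proof. by move=> u w; apply/ffunP=> i; rewrite !ffunE addrC. Qed.
Lemma dsum_add0 : left_id dsum0 dsum_add.
Proof. by move=> u; apply/ffunP=> i; rewrite !ffunE add0r. Qed.
Lemma dsum_addN : left_inverse dsum0 dsum_opp dsum_add.
Proof. by move=> u; apply/ffunP=> i; rewrite !ffunE addNr. Qed.
HB.instance Definition _ :=
  GRing.isZmodule.Build dsum dsum_addA dsum_addC dsum_add0 dsum_addN.

Lemma dsum_scaleA a b (u : dsum) : dsum_scale a (dsum_scale b u) = dsum_scale (a * b) u.
Proof. by apply/ffunP=> i; rewrite !ffunE scalerA. Qed.
Lemma dsum_scale1 : left_id 1 dsum_scale.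
Proof. by move=> u; apply/ffunP=> i; rewrite !ffunE scale1r. Qed.
Lemma dsum_scaleDr : right_distributive dsum_scale +%R.
Proof. by move=> a u w; apply/ffunP=> i; rewrite !ffunE scalerDr. Qed.
Lemma dsum_scaleDl (u : dsum) : {morph dsum_scale^~ u : a b / a + b}.
Proof. by move=> a b; apply/ffunP=> i; rewrite !ffunE scalerDl. Qed.
HB.instance Definition _ := GRing.Zmodule_isLmodule.Build R dsum
  dsum_scaleA dsum_scale1 dsum_scaleDr dsum_scaleDl.

Lemma dsumD (u w : dsum) i : (u + w) i = u i + w i.
Proof. by rewrite ffunE. Qed.

Lemma dsumZ a (u : dsum) i : (a *: u) i = a *: u i.
Proof. by rewrite ffunE. Qed.

Lemma dsum_sum (J : Type) (r : seq J) (P : pred J) (F : J -> dsum) i :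
  (\sum_(j <- r | P j) F j) i = \sum_(j <- r | P j) F j i.
Proof. by elim/big_rec2: _ => [|j y1 y2 _ <-]; rewrite ffunE. Qed.

Lemma dsum_proj_linear i : linear (fun u : dsum => u i).
Proof. by move=> a u w; rewrite dsumD dsumZ. Qed.

End DirectSum.
Arguments dsum {R I} T.

Section LinearExtension.
Variables (R : comNzRingType) (K : choiceType).

Definition lext {V : lmodType R} (F : K -> V) (a : {malg R[K]}) : V :=
  \sum_(k <- msupp a) a@_k *: F k.

Lemma lextEw {V : lmodType R} (F : K -> V) {d : {fset K}} {a} :
  (msupp a `<=` d)%fset -> lext F a = \sum_(k <- d) a@_k *: F k.
Proof.
move=> le; apply: big_fset_incl => // k _ kn.
by rewrite mcoeff_outdom // scale0r.
Qed.

Lemma lext_linear (V : lmodType R) (F : K -> V) : linear (lext F).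
Proof.
move=> c a b.
set d := (msupp a `|` msupp b `|` msupp (c *: a + b))%fset.
have sa : (msupp a `<=` d)%fset by apply/fsubsetP=> k ka; rewrite !inE ka.
have sb : (msupp b `<=` d)%fset by apply/fsubsetP=> k kb; rewrite !inE kb orbT.
have sab : (msupp (c *: a + b) `<=` d)%fset.
  by apply/fsubsetP=> k kab; rewrite !inE kab !orbT.
rewrite (lextEw F sab) (lextEw F sa) (lextEw F sb) scaler_sumr -big_split /=.
by apply: eq_bigr => k _; rewrite mcoeffD mcoeffZ scalerDl scalerA.
Qed.

Lemma lextU (V : lmodType R) (F : K -> V) x k : lext F << x *g k >> = x *: F k.
Proof. by rewrite (lextEw F msuppU_le) big_seq_fset1 mcoeffUU. Qed.

Lemma eq_lext (V : lmodType R) (F1 F2 : K -> V) a :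
  F1 =1 F2 -> lext F1 a = lext F2 a.
Proof. by move=> E; apply: eq_bigr => k _; rewrite E. Qed.

Lemma lext0 (V : lmodType R) a : lext (fun _ : K => 0 : V) a = 0.
Proof. by rewrite /lext big1 // => k _; rewrite scaler0. Qed.

Lemma lext_monalgU a : lext (fun k => << 1 *g k >>) a = a.
Proof.
rewrite [RHS]monalgE; apply: eq_bigr => k _.
by apply/malgP=> k'; rewrite mcoeffZ !mcoeffU mulrnAr mulr1.
Qed.

Lemma lin_lext (V W : lmodType R) (g : V -> W) (F : K -> V) a :
  linear g -> g (lext F a) = lext (g \o F) a.
Proof.
by move=> g_lin; rewrite (lin_sum g_lin); apply: eq_bigr => k _; rewrite (linZ g_lin).
Qed.

End LinearExtension.
Arguments lext {R K V} F a.
Arguments lext_linear {R K V} F.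
Arguments eq_lext {R K V} F1 F2 a.
Arguments lext0 {R K V} a.
Arguments lin_lext {R K V W} g F a.

Lemma lext_remap (R : comNzRingType) (K K' : choiceType) (V : lmodType R)
    (H : K' -> K) (F : K -> V) (a : {malg R[K']}) :
  lext F (remap H a) = lext (F \o H) a.
Proof.
rewrite /remap (lin_sum (lext_linear F)).
by apply: eq_bigr => k _; rewrite lextU.
Qed.

Section RGModules.
Variables (R : comNzRingType) (G : EICategory).

Lemma mmap0 (M : RGmod R G) x y (k : Defs.Hom x y) : Defs.mmap M k 0 = 0.
Proof. exact: lin0 (mmap_linear _ _ M x y k). Qed.

Definition is_iso {M N : RGmod R G} (t : ntfam M N) :=
  is_nat t /\ forall x, bijective (t x).

Lemma is_nat_comp (M N P : RGmod R G) (s : ntfam N P) (t : ntfam M N) :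
  is_nat s -> is_nat t -> is_nat (fun x m => s x (t x m)).
Proof.
move=> [s_lin s_nat] [t_lin t_nat].
by split=> [x a m m'|x y k m] /=; rewrite ?t_lin ?s_lin ?t_nat ?s_nat.
Qed.

Lemma is_nat_precomp (M N : RGmod R G) (phi : endofunctor G) (t : ntfam M N) :
  is_nat t ->
  is_nat (fun x => t (fobj phi x) : mobj (precomp M phi) x -> mobj (precomp N phi) x).
Proof. by move=> [t_lin t_nat]; split=> [x|x y k m]; [exact: t_lin | exact: t_nat]. Qed.

Lemma is_iso_comp (M N P : RGmod R G) (s : ntfam N P) (t : ntfam M N) :
  is_iso s -> is_iso t -> is_iso (fun x m => s x (t x m)).
Proof.
move=> [s_nat s_bij] [t_nat t_bij]; split; first exact: is_nat_comp.
by move=> x; apply: bij_comp.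
Qed.

Definition RGfree (I : finType) (xs : I -> Ob G) : RGmod R G.
Proof.
refine {| mobj := fun c => dsum (fun i => mobj (@RGrep R G (xs i)) c);
          Defs.mmap := fun c d (a : Defs.Hom c d) f =>
            (finfun (fun i => Defs.mmap (RGrep (xs i)) a (f i)) : dsum _) |}.
- move=> c d a r f g; apply/ffunP=> i; rewrite !ffunE.
  exact: (mmap_linear _ _ (RGrep (xs i)) c d a).
- by move=> c f; apply/ffunP=> i; rewrite !ffunE mmap_id.
- by move=> c d e a b f; apply/ffunP=> i; rewrite !ffunE mmap_comp.
Defined.

Definition RGprod (M1 M2 : RGmod R G) : RGmod R G.
Proof.
refine {| mobj := fun c => (mobj M1 c * mobj M2 c)%type : lmodType R;
          Defs.mmap := fun c d (a : Defs.Hom c d) p =>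
            (Defs.mmap M1 a p.1, Defs.mmap M2 a p.2) |}.
- move=> c d a r p q /=.
  by rewrite (mmap_linear _ _ M1 c d a) (mmap_linear _ _ M2 c d a).
- by move=> c [p1 p2] /=; rewrite !mmap_id.
- by move=> c d e a b p /=; rewrite !mmap_comp.
Defined.

Lemma RGprod_iso (M1 M2 N1 N2 : RGmod R G) (t1 : ntfam N1 M1) (t2 : ntfam N2 M2) :
  is_iso t1 -> is_iso t2 ->
  is_iso (fun x (p : mobj (RGprod N1 N2) x) =>
            (t1 x p.1, t2 x p.2) : mobj (RGprod M1 M2) x).
Proof.
move=> [[lin1 nat1] bij1] [[lin2 nat2] bij2]; split; first split.
- by move=> x a p q /=; rewrite lin1 lin2.
- by move=> x y k p /=; rewrite nat1 nat2.
move=> x; have [s1 t1K s1K] := bij1 x; have [s2 t2K s2K] := bij2 x.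
by exists (fun p => (s1 p.1, s2 p.2)) => -[p1 p2] /=; rewrite ?t1K ?t2K ?s1K ?s2K.
Qed.

Lemma basis_sumE (M : RGmod R G) n (xs : 'I_n -> Ob G) b c a :
  basis_sum M xs b c a =
  \sum_i lext (fun k : homT G c (xs i) => Defs.mmap M k (b i)) (a i).
Proof. by []. Qed.

Lemma basis_sum_nat (M : RGmod R G) n (xs : 'I_n -> Ob G) b c d (k : Defs.Hom c d) a :
  Defs.mmap M k (basis_sum M xs b d a) =
  basis_sum M xs b c
    (fun i => remap (fun k0 : homT G d (xs i) => (Defs.comp k0 k : homT G c (xs i))) (a i)).
Proof.
rewrite !basis_sumE (lin_sum (mmap_linear _ _ M c d k)); apply: eq_bigr => i _.
rewrite lext_remap (lin_lext _ _ _ (mmap_linear _ _ M c d k)).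
by apply: eq_lext => k0 /=; rewrite mmap_comp.
Qed.

Lemma basis_sum_linear (M : RGmod R G) n (xs : 'I_n -> Ob G) b c r a a' :
  basis_sum M xs b c (fun i => r *: a i + a' i) =
  r *: basis_sum M xs b c a + basis_sum M xs b c a'.
Proof.
rewrite !basis_sumE scaler_sumr -big_split; apply: eq_bigr => i _ /=.
exact: lext_linear.
Qed.

Definition basis_iso (M : RGmod R G) {n} (xs : 'I_n -> Ob G) b : ntfam (RGfree 'I_n xs) M :=
  fun c f => basis_sum M xs b c (fun i => f i).

Lemma basis_iso_is_iso (M : RGmod R G) {n} (xs : 'I_n -> Ob G) b :
  is_basis M xs b -> is_iso (basis_iso M xs b).
Proof.
move=> xs_basis; split; first split.
- move=> c r f g; rewrite /basis_iso -basis_sum_linear; congr basis_sum.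
  by apply: functional_extensionality_dep => i; rewrite dsumD dsumZ.
- move=> c d k f; rewrite /basis_iso basis_sum_nat; congr basis_sum.
  by apply: functional_extensionality_dep => i; rewrite /= ffunE.
move=> c; apply: (bij_comp (xs_basis c)).
exists (fun a => (finfun a : mobj (RGfree 'I_n xs) c)).
- by move=> f; apply/ffunP => i; rewrite ffunE.
- by move=> a; apply: functional_extensionality_dep => i; rewrite ffunE.
Qed.

Lemma fg_free_iso (M N : RGmod R G) (t : ntfam N M) : is_iso t -> fg_free N -> fg_free M.
Proof.
move=> [[t_lin t_nat] t_bij] [n [xs [b b_basis]]].
exists n, xs, (fun i => t (xs i) (b i)) => c.
apply: (eq_bij (bij_comp (t_bij c) (b_basis c))) => a /=.
rewrite !basis_sumE (lin_sum (t_lin c)); apply: eq_bigr => i _.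
by rewrite (lin_lext _ _ _ (t_lin c)); apply: eq_lext => k /=; rewrite t_nat.
Qed.

End RGModules.
Arguments mmap0 {R G} M {x y} k.
Arguments RGfree {R G} I xs.
Arguments RGprod {R G} M1 M2.
Arguments is_iso {R G M N} t.
Arguments basis_iso {R G} M {n} xs b.
Arguments basis_iso_is_iso {R G M n xs b}.
Arguments RGprod_iso {R G M1 M2 N1 N2 t1 t2}.
Arguments is_iso_comp {R G M N P s t}.
Arguments is_nat_comp {R G M N P s t}.
Arguments is_nat_precomp {R G M N phi t}.
Arguments fg_free_iso {R G M N t}.

Section FreeModules.
Variables (R : comNzRingType) (G : EICategory).

Lemma RGrep_basis (x : Ob G) :
  is_basis (@RGrep R G x) (fun _ : 'I_1 => x) (fun _ => << 1 *g (idm x : homT G x x) >>).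
Proof.
move=> c; exists (fun a _ => a) => [a|a]; last first.
  rewrite basis_sumE big_ord1 -[RHS]lext_monalgU; apply: eq_lext => k /=.
  by rewrite remapU comp1m.
apply: functional_extensionality_dep => i; rewrite (ord1 i) basis_sumE big_ord1.
by rewrite -[RHS]lext_monalgU; apply: eq_lext => k /=; rewrite remapU comp1m.
Qed.

Lemma RGrep_fg_free (x : Ob G) : fg_free (@RGrep R G x).
Proof. by do 3!eexists; exact: RGrep_basis. Qed.

Section RGfreeBasis.
Variables (I : finType) (xs : I -> Ob G).

Definition RGfree_in {i : I} {c : Ob G} (a : mobj (RGrep (xs i)) c) :
    mobj (RGfree I xs) c :=
  finfun (dfwith (fun j => 0 : mobj (@RGrep R G (xs j)) c) a).

Lemma RGfree_in_eq i c (a : mobj (RGrep (xs i)) c) : RGfree_in a i = a.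
Proof. by rewrite ffunE dfwith_in. Qed.

Lemma RGfree_in_neq i j c (a : mobj (RGrep (xs i)) c) : i != j -> RGfree_in a j = 0.
Proof. by move=> ne; rewrite ffunE dfwith_out. Qed.

Lemma RGfree_in_nat i : is_nat (fun c => @RGfree_in i c).
Proof.
split=> [c r a a'|c d k a]; apply/ffunP => j; rewrite !ffunE;
  have [<-|ne] := eqVneq i j; rewrite ?dfwith_in ?dfwith_out //.
- by rewrite scaler0 addr0.
- by rewrite (mmap0 (RGrep (xs j))).
Qed.

Lemma RGfree_sum_in c (f : mobj (RGfree I xs) c) : f = \sum_i RGfree_in (f i).
Proof.
apply/ffunP => j; rewrite dsum_sum (bigD1 j) //= RGfree_in_eq big1 ?addr0 // => i ne.
exact: RGfree_in_neq.
Qed.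

Definition RGfree_unit {i : I} {c : Ob G} (k : homT G c (xs i)) : mobj (RGfree I xs) c :=
  RGfree_in (<< 1 *g k >> : mobj (RGrep (xs i)) c).

Lemma mmap_RGfree_unit i c (k : Defs.Hom c (xs i)) :
  Defs.mmap (RGfree I xs) k (RGfree_unit (idm (xs i))) = RGfree_unit k.
Proof. by rewrite -(RGfree_in_nat i).2 /= remapU comp1m. Qed.

Lemma lext_RGfree_unit_eq i c (a : {malg R[homT G c (xs i)]}) :
  lext (fun k => RGfree_unit k i) a = a.
Proof.
by rewrite -[RHS]lext_monalgU; apply: eq_lext => k; rewrite RGfree_in_eq.
Qed.

Lemma lext_RGfree_unit_neq i j c (a : {malg R[homT G c (xs i)]}) : i != j ->
  lext (fun k => RGfree_unit k j) a = 0.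
Proof.
by move=> ne; rewrite -(lext0 a); apply: eq_lext => k; rewrite RGfree_in_neq.
Qed.

Lemma basis_sum_RGfree_at n (e : 'I_n -> I) c a j :
  basis_sum (RGfree I xs) (fun m => xs (e m)) (fun m => RGfree_unit (idm (xs (e m)))) c a j =
  \sum_m lext (fun k => RGfree_unit k j) (a m).
Proof.
rewrite basis_sumE dsum_sum; apply: eq_bigr => m _.
rewrite (lin_lext _ _ _ (dsum_proj_linear _ _ _ _)); apply: eq_lext => k.
by rewrite [LHS]/comp (mmap_RGfree_unit (e m) c k).
Qed.

Lemma RGfree_fg_free : fg_free (@RGfree R G I xs).
Proof.
exists #|I|, (fun m => xs (enum_val m)).
exists (fun m => RGfree_unit (idm (xs (enum_val m)))) => c.
exists (fun f : mobj (RGfree I xs) c => fun m => f (enum_val m)) => [a|f].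
  apply: functional_extensionality_dep => m; rewrite basis_sum_RGfree_at.
  rewrite (bigD1 m) //= big1 ?addr0 ?lext_RGfree_unit_eq // => m' ne.
  by rewrite lext_RGfree_unit_neq // (inj_eq enum_val_inj).
apply/ffunP => j; rewrite basis_sum_RGfree_at.
rewrite -(big_enum_val (A := predT) (fun i => lext (fun k => RGfree_unit k j) (f i))) /=.
rewrite (bigD1 j) //= big1 ?addr0 ?lext_RGfree_unit_eq // => i ne.
exact: lext_RGfree_unit_neq.
Qed.

Section SplitOff.
Variable i0 : I.

Definition RGfree_rest :
    ntfam (@RGfree R G I xs) (RGfree {i : I | i != i0} (fun j => xs (val j))) :=
  fun c f => finfun (fun j => f (val j)).

Lemma RGfree_rest_nat : is_nat RGfree_rest.
Proof. by split=> [c r f f'|c d k f]; apply/ffunP => j; rewrite !ffunE. Qed.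

Lemma RGfree_rest_surj c (g : mobj (RGfree _ _) c) : exists f, RGfree_rest c f = g.
Proof.
exists (\sum_j RGfree_in (g j)); apply/ffunP => j; rewrite ffunE dsum_sum.
rewrite (bigD1 j) //= RGfree_in_eq big1 ?addr0 // => j' ne.
by apply: RGfree_in_neq; rewrite (inj_eq val_inj).
Qed.

Lemma RGfree_rest_eq0 c (f : mobj (RGfree I xs) c) :
  RGfree_rest c f = 0 <-> exists a, RGfree_in (i := i0) a = f.
Proof.
split=> [f0|[a <-]]; last first.
  by apply/ffunP => j; rewrite ffunE RGfree_in_neq ?ffunE // eq_sym (valP j).
exists (f i0); rewrite [RHS]RGfree_sum_in (bigD1 i0) //= big1 ?addr0 // => i ne.
move/ffunP/(_ (exist _ i ne)): f0; rewrite !ffunE /= => ->.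
exact: (lin0 ((RGfree_in_nat i).1 c)).
Qed.

End SplitOff.

End RGfreeBasis.

Section RGfreeSplit.
Variables (I1 I2 : finType) (xs1 : I1 -> Ob G) (xs2 : I2 -> Ob G).

Definition xs_sum (s : (I1 + I2)%type) : Ob G :=
  match s with inl i => xs1 i | inr i => xs2 i end.

Definition RGfree_split :
    ntfam (RGfree (I1 + I2)%type xs_sum) (RGprod (@RGfree R G I1 xs1) (RGfree I2 xs2)) :=
  fun c f => (finfun (fun i => f (inl i)), finfun (fun i => f (inr i))).

Lemma RGfree_split_iso : is_iso RGfree_split.
Proof.
split; first split.
- by move=> c a f g; congr (_, _); apply/ffunP => i; rewrite !ffunE.
- by move=> c d k f; congr (_, _); apply/ffunP => i; rewrite !ffunE.
move=> c; exists (fun p : mobj (RGprod (RGfree I1 xs1) (RGfree I2 xs2)) c =>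
  finfun (fun s => match s as s0 return mobj (@RGrep R G (xs_sum s0)) c with
                   | inl i => p.1 i | inr i => p.2 i end) : mobj (RGfree _ xs_sum) c).
- by move=> f; apply/ffunP => -[i|i]; rewrite !ffunE.
- by move=> [f1 f2]; congr (_, _); apply/ffunP => i; rewrite !ffunE.
Qed.

End RGfreeSplit.

Lemma RGprod_fg_free (M1 M2 : RGmod R G) :
  fg_free M1 -> fg_free M2 -> fg_free (RGprod M1 M2).
Proof.
move=> [n1 [xs1 [b1 basis1]]] [n2 [xs2 [b2 basis2]]].
have t_iso := is_iso_comp (RGprod_iso (basis_iso_is_iso basis1) (basis_iso_is_iso basis2))
                          (RGfree_split_iso _ _ xs1 xs2).
exact: fg_free_iso t_iso (RGfree_fg_free _ _).
Qed.

End FreeModules.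
Arguments RGrep_fg_free {R G} x.
Arguments RGfree_fg_free {R G I xs}.
Arguments RGfree_in {R G I xs i c} a.
Arguments RGfree_in_nat {R G I xs} i.
Arguments RGfree_rest {R G I xs} i0.
Arguments RGfree_rest_nat {R G I xs} i0.
Arguments RGfree_rest_surj {R G I xs} i0 {c} g.
Arguments RGfree_rest_eq0 {R G I xs} i0 {c} f.

Section AdditiveInvariant.
Variables (R : comNzRingType) (G : EICategory) (phi : endofunctor G).
Variables (A : zmodType) (h : forall M : RGmod R G, ntfam M (precomp M phi) -> A).
Hypothesis h_add : additive_invariant phi h.

Definition zero_nt (M : RGmod R G) : ntfam M (precomp M phi) := fun _ _ => 0.

Lemma zero_nt_Uobj {M} : fg_free M -> is_Uobj phi (zero_nt M).
Proof.
move=> M_free; split=> //; split=> [x r u w|x y k m]; rewrite /zero_nt.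
  by rewrite scaler0 addr0.
by rewrite /= mmap0.
Qed.

Lemma h_zero_nt_iso {M N : RGmod R G} {t : ntfam N M} :
  is_iso t -> fg_free N -> h N (zero_nt N) = h M (zero_nt M).
Proof.
move=> [t_nat t_bij] N_free; have M_free := fg_free_iso (conj t_nat t_bij) N_free.
apply: (h_add.1 _ _ _ _ t (zero_nt_Uobj N_free) (zero_nt_Uobj M_free) _ t_bij).
split=> // x m.
by rewrite /zero_nt (lin0 (t_nat.1 _)).
Qed.

Lemma h_zero_nt_trivial M : fg_free M -> (forall x (m : mobj M x), m = 0) ->
  h M (zero_nt M) = 0.
Proof.
move=> M_free M0; have M_U := zero_nt_Uobj M_free.
have id_mor : is_Umor phi (zero_nt M) (zero_nt M) (fun _ m => m) by [].
apply: (@addrI _ (h M (zero_nt M))); rewrite addr0.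
symmetry; apply: (h_add.2 M M M _ _ _ _ _ M_U M_U M_U id_mor id_mor).
- by move=> x; apply: inj_id.
- by move=> x m; exists m.
- by move=> x m; split=> [_|_]; [exists m | exact: M0].
Qed.

Section UpperTriangular.
Context {M1 M2 : RGmod R G} {g1 : ntfam M1 (precomp M1 phi)}
  {e : ntfam M2 (precomp M1 phi)} {g2 : ntfam M2 (precomp M2 phi)}.
Hypotheses (g1_nat : is_nat g1) (e_nat : is_nat e) (g2_nat : is_nat g2).

Definition upper_tri : ntfam (RGprod M1 M2) (precomp (RGprod M1 M2) phi) :=
  fun x p => (g1 x p.1 + e x p.2, g2 x p.2).

Lemma upper_tri_nat : is_nat upper_tri.
Proof.
case: g1_nat e_nat g2_nat => [lin1 nat1] [line nate] [lin2 nat2].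
split=> [x r p q|x y k p]; apply: injective_projections => /=.
- by rewrite lin1 line scalerDr addrACA.
- exact: lin2.
- by rewrite nat1 nate -(linD (mmap_linear _ _ M1 _ _ _)).
- exact: nat2.
Qed.

Lemma h_upper_tri : fg_free M1 -> fg_free M2 ->
  h (RGprod M1 M2) upper_tri = h M1 g1 + h M2 g2.
Proof.
move=> M1_free M2_free.
have U1 : is_Uobj phi g1 by [].
have U2 : is_Uobj phi g2 by [].
have U : is_Uobj phi upper_tri by split; [exact: RGprod_fg_free | exact: upper_tri_nat].
pose incl : ntfam M1 (RGprod M1 M2) := fun x m => (m, 0).
pose proj : ntfam (RGprod M1 M2) M2 := fun x p => p.2.
have incl_mor : is_Umor phi g1 upper_tri incl.
  split=> [|x m]; last first.
    by rewrite /upper_tri /= (lin0 (e_nat.1 x)) (lin0 (g2_nat.1 x)) addr0.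
  split=> [x r m m'|x y k m];
    apply: (@injective_projections (mobj M1 x) (mobj M2 x)) => //=.
  - by rewrite scaler0 addr0.
  - by rewrite mmap0.
have proj_mor : is_Umor phi upper_tri g2 proj by [].
apply: (h_add.2 _ _ _ _ _ _ incl proj U1 U U2 incl_mor proj_mor).
- by move=> x m m' [].
- by move=> x m2; exists (0, m2).
- move=> x [m1 m2]; rewrite /proj /incl /=.
  by split=> [->|[m [_ ->]]]; first exists m1.
Qed.

End UpperTriangular.

Lemma h_zero_nt_RGfree (I : finType) (xs : I -> Ob G) :
  h (RGfree I xs) (zero_nt _) = \sum_i h (RGrep (xs i)) (zero_nt _).
Proof.
have [n card_I] : exists n, #|I| = n by exists #|I|.
elim: n I xs card_I => [|n IH] I xs card_I.
  rewrite big1 => [|i]; last by have := card0_eq card_I i.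
  apply: h_zero_nt_trivial RGfree_fg_free _ => x f.
  by apply/ffunP => i; have := card0_eq card_I i.
have [i0 _] : exists i0, i0 \in I by apply/card_gt0P; rewrite card_I.
have card_rest : #|{: {i : I | i != i0}}| = n by rewrite card_sig cardC1 card_I.
have in_nat := RGfree_in_nat (R := R) (xs := xs) i0.
have in_mor : is_Umor phi (zero_nt _) (zero_nt _) (fun c => @RGfree_in _ _ _ xs i0 c).
  by split=> // x a; rewrite /zero_nt (lin0 (in_nat.1 _)).
rewrite (h_add.2 _ _ _ _ _ _ _ (RGfree_rest i0) (zero_nt_Uobj (RGrep_fg_free _))
  (zero_nt_Uobj RGfree_fg_free) (zero_nt_Uobj RGfree_fg_free) in_mor) //.
- rewrite IH // (bigD1 i0) //=; congr (_ + _).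
  by symmetry; exact: (big_sub (predC1 i0) (fun i => h (RGrep (xs i)) (zero_nt _))).
- split=> [|x f]; first exact: RGfree_rest_nat.
  by rewrite /zero_nt (lin0 ((RGfree_rest_nat i0).1 _)).
- by move=> x a a' /ffunP/(_ i0); rewrite !RGfree_in_eq.
- by move=> x; exact: RGfree_rest_surj.
- by move=> x; exact: RGfree_rest_eq0.
Qed.

Lemma h_zero_nt_basis (M : RGmod R G) n (xs : 'I_n -> Ob G) b : is_basis M xs b ->
  h M (zero_nt M) = \sum_i h (RGrep (xs i)) (zero_nt _).
Proof.
move=> xs_basis; rewrite -(h_zero_nt_iso (basis_iso_is_iso xs_basis) RGfree_fg_free).
exact: h_zero_nt_RGfree.
Qed.

Lemma h_swap (M1 M2 : RGmod R G) (v : ntfam M1 M2) (f : ntfam M2 (precomp M1 phi)) :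
  is_nat v -> is_nat f -> fg_free M1 -> fg_free M2 ->
  h M1 (fun x m => f x (v x m)) + h M2 (zero_nt M2) =
  h M2 (fun x m => v (fobj phi x) (f x m)) + h M1 (zero_nt M1).
Proof.
move=> v_nat f_nat M1_free M2_free.
have fv_nat := is_nat_comp f_nat v_nat.
have vf_nat := is_nat_comp (is_nat_precomp v_nat) f_nat.
have [z1_free z1_nat] := zero_nt_Uobj M1_free.
have [z2_free z2_nat] := zero_nt_Uobj M2_free.
rewrite -(h_upper_tri fv_nat f_nat z2_nat) // addrC -(h_upper_tri z1_nat f_nat vf_nat) //.
pose shear : ntfam (RGprod M1 M2) (RGprod M1 M2) := fun x p => (p.1, p.2 + v x p.1).
have [[v_lin v_mmap] [f_lin f_mmap]] := (v_nat, f_nat).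
have shear_nat : is_nat shear.
  split=> [x r p q|x y k p]; apply: (@injective_projections (mobj M1 x) (mobj M2 x)) => //=.
  - by rewrite v_lin scalerDr addrACA.
  - by rewrite v_mmap -(linD (mmap_linear _ _ M2 _ _ _)).
have shear_bij x : bijective (shear x).
  by exists (fun p => (p.1, p.2 - v x p.1)) => -[m1 m2]; rewrite /shear /= ?addrK ?subrK.
have tri_U (g1 : ntfam M1 (precomp M1 phi)) (g2 : ntfam M2 (precomp M2 phi)) :
    is_nat g1 -> is_nat g2 -> is_Uobj phi (@upper_tri _ _ g1 f g2).
  by move=> g1_nat g2_nat; split; [exact: RGprod_fg_free | exact: upper_tri_nat].
apply: (h_add.1 _ _ _ _ shear (tri_U _ _ fv_nat z2_nat) (tri_U _ _ z1_nat vf_nat) _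
         shear_bij).
split=> // x [m1 m2]; rewrite /upper_tri /zero_nt /=.
by congr (_, _); rewrite ?add0r -(linD (f_lin x)) // addrC.
Qed.

End AdditiveInvariant.
Arguments h_zero_nt_basis {R G phi A h} h_add {M n xs b}.
Arguments h_swap {R G phi A h} h_add {M1 M2 v f}.

Theorem lemma1p8 (R : comNzRingType) (G : EICategory) (phi : endofunctor G)
    (C D : chaincx R G) (N : nat)
    (nbC : int -> nat) (xsC : forall n, 'I_(nbC n) -> Ob G)
    (bC : forall n (i : 'I_(nbC n)), mobj (cmod C n) (xsC n i))
    (nbD : int -> nat) (xsD : forall n, 'I_(nbD n) -> Ob G)
    (bD : forall n (i : 'I_(nbD n)), mobj (cmod D n) (xsD n i))
    (HC : is_chaincx C) (HD : is_chaincx D)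
    (HCf : cx_finite_free C N xsC bC) (HDf : cx_finite_free D N xsD bD)
    (v : chainfam C D) (f : chainfam D (cx_precomp phi C))
    (Hv : is_chainmap v) (Hf : is_chainmap f) :
  forall (A : zmodType) (h : forall M : RGmod R G, ntfam M (precomp M phi) -> A),
    additive_invariant phi h ->
    u_eval phi h (C := C) (fun n x m => f n x (v n x m)) N + s_chi_eval phi h N xsD
    = u_eval phi h (C := D) (fun n x m => v n (fobj phi x) (f n x m)) N
      + s_chi_eval phi h N xsC.
Proof.
move=> A h h_add.
rewrite /u_eval /s_chi_eval -!big_split /=; apply: eq_bigr => j _.
set k := (j%:Z - N%:Z); rewrite -!mulrzDl; congr (_ *~ _).
rewrite -(h_zero_nt_basis h_add (HCf.1 k)) -(h_zero_nt_basis h_add (HDf.1 k)).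
apply: (h_swap h_add (Hv.1 k) (Hf.1 k)).
- by exists (nbC k), (xsC k), (bC k); exact: HCf.1.
- by exists (nbD k), (xsD k), (bD k); exact: HDf.1.
Qed.
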